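(* Let $n\ge2$. The isolated subsemigroups of $\overline{\mathcal{PI}^{\ast}}_n$ are exactly $\overline{\mathcal{PI}^{\ast}}_n$, $\mathcal{S}_n$, $\overline{\mathcal{PI}^{\ast}}_n\setminus\mathcal{S}_n$, and the maximal subgroups $G(e)$ where $e$ is an idempotent with $\mathrm{corank}(e)\le 1$.
   Context: Let $X=\{1,\dots,n\}$, $X'=\{1',\dots,n'\}$. $\overline{\mathcal{PI}^{\ast}}_n$ is the set of partitions of $X\cup X'$ each of whose blocks is a singleton (point) or a generalised line (a set meeting both $X$ and $X'$), with product $\circ$: $\alpha\circ\beta$ has as generalised lines exactly the sets $A\cup D'$ such that $A\cup B'$ is a generalised line of $\alpha$ and $B\cup D'$ is a generalised line of $\beta$ (same $B\subseteq X$), all other elements being points. Idempotents are exactly the elements whose generalised lines all have the form $E\cup E'$. For an idempotent $e$, $\mathrm{corank}(e)$ is the number of $x\in X$ such that $\{x\}$ is a block of $e$. $\mathcal{S}_n$ is the group of units (elements all of whose blocks are $\{x,\pi(x)'\}$ for a permutation $\pi$). $G(e)$ is the $\mathcal{H}$-class of $e$. A subsemigroup $T$ of a semigroup $S$ is isolated if for all $a\in S$ and $k\ge1$, $a^k\in T$ implies $a\in T$. *)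

From mathcomp Require Import all_boot fingroup perm.
Set Implicit Arguments. Unset Strict Implicit. Unset Printing Implicit Defensive.

(* Points of X ∪ X': inl x is x ∈ X, inr x is x' ∈ X'. *)
Definition point (n : nat) := ('I_n + 'I_n)%type.
Definition elt (n : nat) := {set {set point n}}.

Section Defs.
Variable n : nat.
Implicit Types (P Q e a : elt n) (B : {set point n}).

Definition topset B : {set 'I_n} := [set x | inl x \in B].
Definition botset B : {set 'I_n} := [set x | inr x \in B].

Definition is_gline B : bool := (topset B != set0) && (botset B != set0).

Definition PIbar : {set elt n} :=
  [set P : elt n | partition P [set: point n] &&
     [forall B in P, (#|B| == 1) || is_gline B]].

Definition mkline (A D : {set 'I_n}) : {set point n} :=
  (inl @: A) :|: (inr @: D).

Definition prod_lines P Q : {set {set point n}} :=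
  [set mkline (topset L) (botset M) |
     L in [set L in P | is_gline L],
     M in [set M in Q | is_gline M & topset M == botset L]].

Definition pmul P Q : elt n :=
  prod_lines P Q :|: [set [set z] | z : point n & z \notin cover (prod_lines P Q)].

(* a^k for k >= 1 *)
Definition ppow a (k : nat) : elt n := iter k.-1 (fun x => pmul x a) a.

Definition isolated_subsemigroup (T : {set elt n}) : Prop :=
  [/\ T \subset PIbar, T != set0,
      (forall a b, a \in T -> b \in T -> pmul a b \in T) &
      (forall a k, a \in PIbar -> 0 < k -> ppow a k \in T -> a \in T)].

Definition Sn : {set elt n} :=
  [set P : elt n | [exists pi : {perm 'I_n},
      P == [set [set inl x; inr (pi x)] | x : 'I_n]]].

Definition PI_idempotent e : bool := pmul e e == e.

Definition corank e : nat := #|[set x : 'I_n | [set inl x] \in e]|.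

(* Green's relations in PIbar_n (using S^1) *)
Definition in_right_ideal a b : bool :=
  (a == b) || [exists s in PIbar, a == pmul b s].
Definition in_left_ideal a b : bool :=
  (a == b) || [exists s in PIbar, a == pmul s b].
Definition Hrel a b : bool :=
  [&& in_right_ideal a b, in_right_ideal b a,
      in_left_ideal a b & in_left_ideal b a].

Definition Hclass e : {set elt n} := [set a in PIbar | Hrel a e].

End Defs.

From mathcomp Require Import all_boot perm zify.
Set Implicit Arguments. Unset Strict Implicit. Unset Printing Implicit Defensive.

(* An element of PIbar_n is a bijection between two families of pairwise
   disjoint nonempty blocks of X (the tops and the bottoms of its lines), and
   the product is composition; the idempotents are the identities on block
   families, and every element has an idempotent power.
   Two distinct idempotents in an isolated T multiply to the identity on a
   strictly smaller family. Square roots of block transpositions and of maps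
   moving one block to a fresh one then shrink families down to the zero and
   rebuild from it the identity on any family of fewer than n blocks: T holds
   every non-unit, and it is PIbar_n or PIbar_n \ S_n according as it meets
   S_n. If T has a single idempotent e, each element of T has power e, so
   T = G(e), the elements permuting the blocks of e; two points uncovered by e
   would give, by the same trick, a second idempotent. Conversely a root of an
   element of G(e) can only add the block of uncovered points on both sides,
   and its powers keep that block: G(e) is isolated when corank e <= 1. *)

Lemma not_disjointP (T : finType) (X Y : {set T}) :
  reflect (exists2 x, x \in X & x \in Y) (~~ [disjoint X & Y]).
Proof.
rewrite -setI_eq0; apply: (iffP (set0Pn _)) => [[x]|[x h1 h2]].
  by rewrite inE => /andP[]; exists x.
by exists x; rewrite inE h1 h2.
Qed.

Lemma set1_neq0 (T : finType) (x : T) : [set x] != set0.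
Proof. by apply/set0Pn; exists x; rewrite inE. Qed.

Section Lines.
Variable n : nat.
Implicit Types (A D : {set 'I_n}) (X Y : {set point n}) (P Q S : elt n).
Implicit Types (R : rel {set 'I_n}) (L : {set {set point n}}).

Lemma mkline_inl A D x : (inl x \in mkline A D) = (x \in A).
Proof.
rewrite /mkline in_setU mem_imset; last by move=> ? ? [].
by case: imsetP => [[]|]; rewrite ?orbF.
Qed.

Lemma mkline_inr A D x : (inr x \in mkline A D) = (x \in D).
Proof.
rewrite /mkline in_setU [inr x \in _ @: D]mem_imset; last by move=> ? ? [].
by case: imsetP => [[]|].
Qed.

Lemma topset_mkline A D : topset (mkline A D) = A.
Proof. by apply/setP => x; rewrite inE mkline_inl. Qed.

Lemma botset_mkline A D : botset (mkline A D) = D.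
Proof. by apply/setP => x; rewrite inE mkline_inr. Qed.

Lemma mkline_inj A D A' D' : mkline A D = mkline A' D' -> A = A' /\ D = D'.
Proof.
move=> e; split; first by rewrite -(topset_mkline A D) e topset_mkline.
by rewrite -(botset_mkline A D) e botset_mkline.
Qed.

Lemma mkline_blocks X : mkline (topset X) (botset X) = X.
Proof. by apply/setP => -[x|x]; rewrite ?mkline_inl ?mkline_inr inE. Qed.

Lemma is_gline_mkline A D : is_gline (mkline A D) = (A != set0) && (D != set0).
Proof. by rewrite /is_gline topset_mkline botset_mkline. Qed.

Lemma mkline_neq_set1 A D z : A != set0 -> D != set0 -> mkline A D != [set z].
Proof.
move=> /set0Pn[a ha] /set0Pn[d hd]; apply/eqP => e.
have : inl a \in mkline A D by rewrite mkline_inl.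
have : inr d \in mkline A D by rewrite mkline_inr.
by rewrite e !inE => /eqP <-.
Qed.

Lemma mkline_meet A D A' D' :
  ~~ [disjoint mkline A D & mkline A' D'] ->
  ~~ [disjoint A & A'] \/ ~~ [disjoint D & D'].
Proof.
case/not_disjointP => -[x|x]; rewrite ?mkline_inl ?mkline_inr => h1 h2.
  by left; apply/not_disjointP; exists x.
by right; apply/not_disjointP; exists x.
Qed.

Definition has_line P A D : bool := [&& mkline A D \in P, A != set0 & D != set0].

Definition rel_lines R : {set {set point n}} :=
  [set mkline p.1 p.2 | p in [set p : {set 'I_n} * {set 'I_n} | R p.1 p.2]].

Definition with_points (L : {set {set point n}}) : elt n :=
  L :|: [set [set z] | z : point n & z \notin cover L].

Definition of_rel R : elt n := with_points (rel_lines R).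

Definition rel_comp (R R' : rel {set 'I_n}) A D : bool := [exists B, R A B && R' B D].

Definition block_bij R : Prop :=
  [/\ forall A D, R A D -> (A != set0) && (D != set0),
      forall A D A' D', R A D -> R A' D' -> ~~ [disjoint A & A'] -> A = A' /\ D = D' &
      forall A D A' D', R A D -> R A' D' -> ~~ [disjoint D & D'] -> A = A' /\ D = D'].

Lemma rel_linesP R X :
  reflect (exists A D, R A D /\ X = mkline A D) (X \in rel_lines R).
Proof.
apply: (iffP imsetP) => [[p]|[A [D [h ->]]]].
  by rewrite inE => hp ->; exists p.1, p.2.
by exists (A, D); rewrite ?inE.
Qed.

Lemma mkline_rel_lines R A D : R A D -> mkline A D \in rel_lines R.
Proof. by move=> h; apply/rel_linesP; exists A, D. Qed.

Lemma PIbar_intro S :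
  (forall X, X \in S -> X != set0 /\ (#|X| == 1) || is_gline X) ->
  {in S &, forall X Y, X != Y -> [disjoint X & Y]} ->
  (forall z, z \in cover S) -> S \in PIbar n.
Proof.
move=> hS hdis hcov; rewrite inE; apply/andP; split.
  apply/and3P; split.
  - by apply/eqP/setP => z; rewrite hcov inE.
  - exact/trivIsetP.
  - by apply/negP => /hS [/eqP].
by apply/forall_inP => X /hS [].
Qed.

Lemma with_points_PIbar L :
  (forall X, X \in L -> is_gline X) ->
  {in L &, forall X Y, X != Y -> [disjoint X & Y]} ->
  with_points L \in PIbar n.
Proof.
move=> hg hdis; apply: PIbar_intro; rewrite /with_points.
- move=> X /setUP[hX|/imsetP[z _ ->]]; last by rewrite cards1 set1_neq0.
  split; last by rewrite hg ?orbT.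
  case/andP: (hg X hX) => /set0Pn[x]; rewrite inE => hx _.
  by apply/set0Pn; exists (inl x).
- move=> X Y /setUP[hX|/imsetP[z hz ->]] /setUP[hY|/imsetP[w hw ->]] hne.
  + exact: hdis.
  + rewrite disjoint_sym disjoints1; apply: contraTN hw => hwX.
    by rewrite inE negbK; apply/bigcupP; exists X.
  + rewrite disjoints1; apply: contraTN hz => hzY.
    by rewrite inE negbK; apply/bigcupP; exists Y.
  + by rewrite disjoints1 inE; apply: contra hne => /eqP ->.
- move=> z; case: (boolP (z \in cover L)) => [/bigcupP[X hX hzX]|hz].
    by apply/bigcupP; exists X; rewrite ?inE ?hX.
  apply/bigcupP; exists [set z]; last by rewrite inE.
  by apply/setUP; right; apply/imsetP; exists z; rewrite ?inE.
Qed.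

Lemma of_rel_PIbar R : block_bij R -> of_rel R \in PIbar n.
Proof.
case=> hne htop hbot; apply: with_points_PIbar.
  by move=> X /rel_linesP[A [D [h ->]]]; rewrite is_gline_mkline hne.
move=> X Y /rel_linesP[A [D [h ->]]] /rel_linesP[A' [D' [h' ->]]] hXY.
apply: contraNT hXY => /mkline_meet[/(htop _ _ _ _ h h')|/(hbot _ _ _ _ h h')];
  by case=> -> ->.
Qed.

Lemma has_line_of_rel R A D : block_bij R -> has_line (of_rel R) A D = R A D.
Proof.
case=> hne _ _; apply/idP/idP => [|h].
  case/and3P => /setUP[/rel_linesP[A' [D' [h /mkline_inj[-> ->]]]] //|].
  by case/imsetP => z _ e hA hD; move: (mkline_neq_set1 z hA hD); rewrite e eqxx.
by rewrite /has_line hne // andbT /of_rel /with_points; apply/setUP; left; apply: mkline_rel_lines.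
Qed.

Lemma eq_of_rel R (R' : rel {set 'I_n}) : (forall A D, R A D = R' A D) -> of_rel R = of_rel R'.
Proof.
move=> e; rewrite /of_rel /rel_lines.
suff -> : [set p | R p.1 p.2] = [set p | R' p.1 p.2] by [].
by apply/setP => p; rewrite !inE e.
Qed.

Lemma PIbar_disjoint P : P \in PIbar n ->
  {in P &, forall X Y, X != Y -> [disjoint X & Y]}.
Proof. by rewrite inE => /andP[/and3P[_ /trivIsetP h _] _]. Qed.

Lemma PIbar_coverP P z : P \in PIbar n -> exists2 X, X \in P & z \in X.
Proof.
rewrite inE => /andP[/and3P[/eqP hc _ _] _].
have : z \in cover P by rewrite hc inE.
by case/bigcupP => X; exists X.
Qed.

Lemma PIbar_block P X : P \in PIbar n -> X \in P -> (#|X| == 1) || is_gline X.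
Proof. by rewrite inE => /andP[_ /forall_inP h] /h. Qed.

Lemma has_line_neq0 P A D : has_line P A D -> A != set0 /\ D != set0.
Proof. by case/and3P. Qed.

Lemma has_line_mem P A D : has_line P A D -> mkline A D \in P.
Proof. by case/and3P. Qed.

Lemma has_line_gline P X : X \in P -> is_gline X -> has_line P (topset X) (botset X).
Proof. by move=> hX /andP[h1 h2]; rewrite /has_line mkline_blocks hX h1 h2. Qed.

Lemma block_bij_has_line P : P \in PIbar n -> block_bij (has_line P).
Proof.
move=> hP; have hdis := PIbar_disjoint hP.
have same_line A D A' D' : has_line P A D -> has_line P A' D' ->
    ~~ [disjoint mkline A D & mkline A' D'] -> A = A' /\ D = D'.
  move=> h h' hm; apply: mkline_inj; apply/eqP; apply: contraNT hm.
  exact: hdis (has_line_mem h) (has_line_mem h').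
split.
- by move=> A D /and3P[_ -> ->].
- move=> A D A' D' h h' /not_disjointP[x hx hx']; apply: same_line h h' _.
  by apply/not_disjointP; exists (inl x); rewrite mkline_inl.
- move=> A D A' D' h h' /not_disjointP[x hx hx']; apply: same_line h h' _.
  by apply/not_disjointP; exists (inr x); rewrite mkline_inr.
Qed.

Lemma of_rel_has_line P : P \in PIbar n -> of_rel (has_line P) = P.
Proof.
move=> hP; have hdis := PIbar_disjoint hP.
apply/eqP; rewrite eqEsubset; apply/andP; split; apply/subsetP => X.
  case/setUP => [/rel_linesP[A [D [h ->]]]|/imsetP[z hz ->]].
    exact: has_line_mem.
  have [Y hY hzY] := PIbar_coverP z hP.
  case/orP: (PIbar_block hP hY) => [/cards1P[z' ez']|hg].
    by move: hzY; rewrite ez' inE => /eqP ->; rewrite -ez'.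
  move: hz; rewrite inE => /negP[]; apply/bigcupP; exists Y => //.
  by rewrite -[Y]mkline_blocks; apply: mkline_rel_lines; apply: has_line_gline.
move=> hX; case/orP: (PIbar_block hP hX) => [/cards1P[z ez]|hg]; last first.
  by apply/setUP; left; rewrite -[X]mkline_blocks; apply/mkline_rel_lines/has_line_gline.
apply/setUP; right; apply/imsetP; exists z => //; rewrite inE.
apply/bigcupP => -[Y /rel_linesP[A [D [h eY]]] hzY].
have [hA hD] := has_line_neq0 h.
have hXY : X != Y by rewrite ez eY eq_sym mkline_neq_set1.
move: (hdis _ _ hX (has_line_mem h)); rewrite -eY => /(_ hXY).
by rewrite ez disjoints1 hzY.
Qed.

Lemma pmulE P Q : pmul P Q = of_rel (rel_comp (has_line P) (has_line Q)).
Proof.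
rewrite /pmul /of_rel; congr with_points.
apply/setP => X; apply/imset2P/rel_linesP.
  case=> L M; rewrite !inE => /andP[hL gL] /and3P[hM gM /eqP e] ->.
  exists (topset L), (botset M); split => //.
  by apply/existsP; exists (botset L); rewrite has_line_gline //= -e has_line_gline.
case=> A [D [/existsP[B /andP[h1 h2]] ->]].
have [[hA hB] [_ hD]] := (has_line_neq0 h1, has_line_neq0 h2).
apply: (@Imset2spec _ _ _ _ _ _ _ (mkline A B) (mkline B D)).
- by rewrite inE has_line_mem //= is_gline_mkline hA hB.
- by rewrite inE has_line_mem //= is_gline_mkline topset_mkline botset_mkline hB hD eqxx.
- by rewrite topset_mkline botset_mkline.
Qed.

Lemma block_bij_comp R (R' : rel {set 'I_n}) : block_bij R -> block_bij R' -> block_bij (rel_comp R R').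
Proof.
case=> hR1 hR2 hR3 [hS1 hS2 hS3]; split.
- move=> A D /existsP[B /andP[h1 h2]].
  by case/andP: (hR1 _ _ h1) => -> _; case/andP: (hS1 _ _ h2).
- move=> A D A' D' /existsP[B /andP[h1 h2]] /existsP[B' /andP[h1' h2']] hm.
  case: (hR2 _ _ _ _ h1 h1' hm) => <- eB; subst B'.
  case/andP: (hS1 _ _ h2) => /set0Pn[b hb] _.
  by case: (hS2 _ _ _ _ h2 h2') => //; apply/not_disjointP; exists b.
- move=> A D A' D' /existsP[B /andP[h1 h2]] /existsP[B' /andP[h1' h2']] hm.
  case: (hS3 _ _ _ _ h2 h2' hm) => eB <-; subst B'.
  case/andP: (hR1 _ _ h1) => _ /set0Pn[b hb].
  by case: (hR3 _ _ _ _ h1 h1') => //; apply/not_disjointP; exists b.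
Qed.

Lemma pmul_PIbar P Q : P \in PIbar n -> Q \in PIbar n -> pmul P Q \in PIbar n.
Proof.
by move=> hP hQ; rewrite pmulE; apply/of_rel_PIbar/block_bij_comp; apply: block_bij_has_line.
Qed.

Lemma has_line_pmul P Q A D : P \in PIbar n -> Q \in PIbar n ->
  has_line (pmul P Q) A D = rel_comp (has_line P) (has_line Q) A D.
Proof.
by move=> hP hQ; rewrite pmulE has_line_of_rel //; apply: block_bij_comp; apply: block_bij_has_line.
Qed.

Lemma pmul_of_rel R (R' : rel {set 'I_n}) : block_bij R -> block_bij R' ->
  pmul (of_rel R) (of_rel R') = of_rel (rel_comp R R').
Proof.
move=> hR hR'; rewrite pmulE; apply: eq_of_rel => A D.
by apply: eq_existsb => B; rewrite !has_line_of_rel.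
Qed.

Lemma PIbar_ext P Q : P \in PIbar n -> Q \in PIbar n ->
  (forall A D, has_line P A D = has_line Q A D) -> P = Q.
Proof. by move=> hP hQ e; rewrite -(of_rel_has_line hP) -(of_rel_has_line hQ); apply: eq_of_rel. Qed.

Lemma pmulA P Q S : P \in PIbar n -> Q \in PIbar n -> S \in PIbar n ->
  pmul (pmul P Q) S = pmul P (pmul Q S).
Proof.
move=> hP hQ hS; apply: PIbar_ext; rewrite ?pmul_PIbar // => A D.
rewrite !has_line_pmul ?pmul_PIbar //; apply/existsP/existsP.
  case=> C /andP[]; rewrite has_line_pmul // => /existsP[B /andP[h1 h2]] h3.
  by exists B; rewrite h1 has_line_pmul //; apply/existsP; exists C; rewrite h2.
case=> B /andP[h1]; rewrite has_line_pmul // => /existsP[C /andP[h2 h3]].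
by exists C; rewrite h3 andbT has_line_pmul //; apply/existsP; exists B; rewrite h1.
Qed.

End Lines.

Section Powers.
Variable n : nat.
Implicit Types (a : elt n) (S : {set elt n}).

Lemma ppowS a k : 0 < k -> ppow a k.+1 = pmul (ppow a k) a.
Proof. by case: k. Qed.

Lemma ppow_closed S a k :
  {in S &, forall b c, pmul b c \in S} -> a \in S -> 0 < k -> ppow a k \in S.
Proof.
move=> hS ha; elim: k => // -[_|k IH] _ //.
by rewrite ppowS // hS ?IH.
Qed.

Lemma ppow_PIbar a k : a \in PIbar n -> 0 < k -> ppow a k \in PIbar n.
Proof. by apply: ppow_closed => b c; apply: pmul_PIbar. Qed.

Lemma ppowD a i j : a \in PIbar n -> 0 < i -> 0 < j ->
  ppow a (i + j) = pmul (ppow a i) (ppow a j).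
Proof.
move=> ha hi; elim: j => // -[_|j IH] _; first by rewrite addn1 ppowS.
by rewrite addnS ppowS ?addn_gt0 ?hi // IH // [ppow a j.+2]ppowS // pmulA ?ppow_PIbar.
Qed.

Lemma ppowSl a k : a \in PIbar n -> 0 < k -> ppow a k.+1 = pmul a (ppow a k).
Proof. by move=> ha hk; rewrite -add1n ppowD. Qed.

(* Pigeonhole: [ppow a] repeats on an arithmetic progression s, s + p, ...;
   the exponent 2sp lies on it and doubles to a point of it. *)
Lemma ppow_idempotent a : a \in PIbar n ->
  exists2 k, 1 < k & PI_idempotent (ppow a k).
Proof.
move=> ha; pose f (i : 'I_#|{: elt n}|.+1) := ppow a i.+1.
have : ~~ injectiveb f.
  by apply/injectiveP => /leq_card; rewrite card_ord ltnn.
case/injectivePn => i [j hij e].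
wlog lt_ij : i j hij e / i < j.
  move=> W; case: (ltngtP i j) => h; first exact: (W i j).
    by apply: (W j i) => //; rewrite eq_sym.
  by move: hij; rewrite (val_inj h) eqxx.
set s := i.+1; set p := j - i.
have period q : ppow a (s + p + q) = ppow a (s + q).
  have e0 : ppow a (s + p) = ppow a s.
    by rewrite (_ : s + p = j.+1); [exact: (esym e) | rewrite /s /p; lia].
  case: q => [|q]; first by rewrite !addn0.
  by rewrite ppowD ?addn_gt0 // e0 -ppowD.
have periods t q : ppow a (s + t * p + q) = ppow a (s + q).
  elim: t q => [|t IH] q; first by rewrite addn0.
  by rewrite mulSn addnA -(addnA (s + p)) period addnA IH.
exists (2 * s * p); first by rewrite /p /s; nia.
apply/eqP; rewrite -ppowD; try (rewrite /p /s; nia).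
have -> : 2 * s * p + 2 * s * p = s + (2 * s) * p + (2 * s * p - s) by rewrite /p /s; nia.
by rewrite periods; congr ppow; rewrite /p /s; nia.
Qed.

End Powers.

Section Blocks.
Variable n : nat.
Implicit Types (A B C D : {set 'I_n}) (F G : {set {set 'I_n}}) (P Q a e : elt n).

Definition dom_blocks P := [set A | [exists D, has_line P A D]].
Definition cod_blocks P := [set D | [exists A, has_line P A D]].

Definition block_family F : bool := (set0 \notin F) && trivIset F.

Definition diag_rel F : rel {set 'I_n} := fun A B => (A == B) && (A \in F).
Definition diag_elt F : elt n := of_rel (diag_rel F).

Lemma dom_blocksP P A : reflect (exists D, has_line P A D) (A \in dom_blocks P).
Proof. by rewrite inE; apply: existsP. Qed.

Lemma cod_blocksP P D : reflect (exists A, has_line P A D) (D \in cod_blocks P).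
Proof. by rewrite inE; apply: existsP. Qed.

Lemma block_family_neq0 F A : block_family F -> A \in F -> A != set0.
Proof. by case/andP => h0 _; apply: contraTneq => ->. Qed.

Lemma block_family_eq F A B : block_family F -> A \in F -> B \in F ->
  ~~ [disjoint A & B] -> A = B.
Proof.
case/andP => _ /trivIsetP tF hA hB; apply: contraNeq.
exact: tF.
Qed.

Lemma block_familyS F G : G \subset F -> block_family F -> block_family G.
Proof.
move=> sGF /andP[h0 tF]; rewrite /block_family (trivIsetS sGF) // andbT.
by apply: contra h0; apply: (subsetP sGF).
Qed.

Lemma block_familyU1 C F : block_family F -> C != set0 ->
  {in F, forall A, [disjoint C & A]} -> block_family (C |: F) /\ C \notin F.
Proof.
move=> /andP[h0 tF] hC hdis; have [tCF ->] := trivIsetU1 hdis tF h0.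
by rewrite /block_family tCF !inE negb_or eq_sym hC h0.
Qed.

Lemma block_familyP F :
  reflect ({in F, forall A, A != set0} /\
           {in F &, forall A B, ~~ [disjoint A & B] -> A = B}) (block_family F).
Proof.
apply: (iffP idP) => [hF|[h0 heq]].
  by split=> [A|A B]; [apply: block_family_neq0 | apply: block_family_eq].
apply/andP; split; first by apply/negP => /h0; rewrite eqxx.
by apply/trivIsetP => A B hA hB; apply: contraNT => /heq ->.
Qed.

Lemma has_line_functional P A D D' : P \in PIbar n ->
  has_line P A D -> has_line P A D' -> D = D'.
Proof.
move=> hP h h'; case: (block_bij_has_line hP) => _ htop _.
case: (has_line_neq0 h) => /set0Pn[x hx] _.
by case: (htop _ _ _ _ h h') => //; apply/not_disjointP; exists x.
Qed.

Lemma has_line_injective P A A' D : P \in PIbar n ->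
  has_line P A D -> has_line P A' D -> A = A'.
Proof.
move=> hP h h'; case: (block_bij_has_line hP) => _ _ hbot.
case: (has_line_neq0 h) => _ /set0Pn[x hx].
by case: (hbot _ _ _ _ h h') => //; apply/not_disjointP; exists x.
Qed.

Lemma block_family_dom P : P \in PIbar n -> block_family (dom_blocks P).
Proof.
move=> hP; case: (block_bij_has_line hP) => hne htop _; apply/block_familyP; split.
  by move=> A /dom_blocksP[D /hne /andP[]].
by move=> A B /dom_blocksP[D hD] /dom_blocksP[D' hD'] /(htop _ _ _ _ hD hD')[].
Qed.

Lemma block_family_cod P : P \in PIbar n -> block_family (cod_blocks P).
Proof.
move=> hP; case: (block_bij_has_line hP) => hne _ hbot; apply/block_familyP; split.
  by move=> D /cod_blocksP[A /hne /andP[]].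
by move=> D D' /cod_blocksP[A hA] /cod_blocksP[A' hA'] /(hbot _ _ _ _ hA hA')[].
Qed.

Lemma card_dom_cod P : P \in PIbar n -> #|dom_blocks P| = #|cod_blocks P|.
Proof.
move=> hP; pose L := [set p : {set 'I_n} * {set 'I_n} | has_line P p.1 p.2].
have -> : dom_blocks P = [set p.1 | p in L].
  apply/setP => A; apply/dom_blocksP/imsetP => [[D h]|[p]].
    by exists (A, D); rewrite ?inE.
  by rewrite inE => h ->; exists p.2.
have -> : cod_blocks P = [set p.2 | p in L].
  apply/setP => D; apply/cod_blocksP/imsetP => [[A h]|[p]].
    by exists (A, D); rewrite ?inE.
  by rewrite inE => h ->; exists p.1.
rewrite !card_in_imset // => -[A D] [A' D']; rewrite !inE /= => h h' e; subst.
  by rewrite (has_line_injective hP h h').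
by rewrite (has_line_functional hP h h').
Qed.

Lemma block_bij_of_families (R : rel {set 'I_n}) F G :
  block_family F -> block_family G ->
  (forall A B, R A B -> A \in F /\ B \in G) ->
  (forall A B B', R A B -> R A B' -> B = B') ->
  (forall A A' B, R A B -> R A' B -> A = A') -> block_bij R.
Proof.
move=> /block_familyP[hF0 hF] /block_familyP[hG0 hG] hin hfun hinj; split.
- by move=> A B /hin[/hF0 -> /hG0 ->].
- move=> A D A' D' h h' hm; have [[hA _] [hA' _]] := (hin _ _ h, hin _ _ h').
  by have eA := hF _ _ hA hA' hm; subst A'; split => //; apply: hfun h h'.
- move=> A D A' D' h h' hm; have [[_ hD] [_ hD']] := (hin _ _ h, hin _ _ h').
  by have eD := hG _ _ hD hD' hm; subst D'; split => //; apply: hinj h h'.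
Qed.

Lemma block_bij_diag F : block_family F -> block_bij (diag_rel F).
Proof.
move=> hF; apply: (block_bij_of_families hF hF).
- by move=> A B /andP[/eqP <-].
- by move=> A B B' /andP[/eqP <- _] /andP[/eqP].
- by move=> A A' B /andP[/eqP -> _] /andP[/eqP].
Qed.

Lemma has_line_diag F A D : block_family F -> has_line (diag_elt F) A D = diag_rel F A D.
Proof. by move=> hF; rewrite has_line_of_rel //; apply: block_bij_diag. Qed.

Lemma diag_elt_PIbar F : block_family F -> diag_elt F \in PIbar n.
Proof. by move=> hF; apply/of_rel_PIbar/block_bij_diag. Qed.

Lemma dom_blocks_diag F : block_family F -> dom_blocks (diag_elt F) = F.
Proof.
move=> hF; apply/setP => A; apply/dom_blocksP/idP => [[D]|hA].
  by rewrite has_line_diag // => /andP[].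
by exists A; rewrite has_line_diag // /diag_rel eqxx.
Qed.

Lemma rel_comp_diag F G A D :
  rel_comp (diag_rel F) (diag_rel G) A D = diag_rel (F :&: G) A D.
Proof.
apply/existsP/idP => [[B /andP[/andP[/eqP <- hF] /andP[/eqP <- hG]]]|/andP[/eqP <-]].
  by rewrite /diag_rel eqxx inE hF.
by rewrite inE => /andP[hF hG]; exists A; rewrite /diag_rel eqxx hF hG.
Qed.

Lemma diag_elt_mul F G : block_family F -> block_family G ->
  pmul (diag_elt F) (diag_elt G) = diag_elt (F :&: G).
Proof.
move=> hF hG; rewrite pmul_of_rel; try exact: block_bij_diag.
by apply: eq_of_rel => A D; rewrite rel_comp_diag.
Qed.

Lemma diag_elt_idempotent F : block_family F -> PI_idempotent (diag_elt F).
Proof. by move=> hF; rewrite /PI_idempotent diag_elt_mul // setIid. Qed.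

Lemma has_line_idempotent e A D : e \in PIbar n -> PI_idempotent e ->
  has_line e A D = diag_rel (dom_blocks e) A D.
Proof.
move=> he /eqP hee; apply/idP/idP => [h|/andP[/eqP <- /dom_blocksP[D' hD']]].
  rewrite /diag_rel (_ : A \in _); last by apply/dom_blocksP; exists D.
  move: (h); rewrite -{1}hee has_line_pmul // => /existsP[C /andP[h1 h2]].
  rewrite (has_line_functional he h1 h) in h2.
  by rewrite (has_line_injective he h2 h) eqxx.
move: (hD'); rewrite -{1}hee has_line_pmul // => /existsP[C /andP[h1 h2]].
rewrite (has_line_functional he h1 hD') in h2.
by rewrite -(has_line_injective he h2 hD').
Qed.

Lemma idempotentE e : e \in PIbar n -> PI_idempotent e -> e = diag_elt (dom_blocks e).
Proof.
move=> he hee; have hF := block_family_dom he.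
apply: PIbar_ext => //; first exact: diag_elt_PIbar.
by move=> A D; rewrite has_line_idempotent // has_line_diag.
Qed.

Lemma cod_blocks_idempotent e : e \in PIbar n -> PI_idempotent e ->
  cod_blocks e = dom_blocks e.
Proof.
move=> he hee; rewrite {1}(idempotentE he hee).
apply/setP => D; apply/cod_blocksP/idP => [[A]|hD].
  by rewrite has_line_diag ?block_family_dom // => /andP[/eqP ->].
by exists D; rewrite has_line_diag ?block_family_dom // /diag_rel eqxx.
Qed.

Lemma dom_blocks_pmul_sub P Q : P \in PIbar n -> Q \in PIbar n ->
  dom_blocks (pmul P Q) \subset dom_blocks P.
Proof.
move=> hP hQ; apply/subsetP => A /dom_blocksP[D].
by rewrite has_line_pmul // => /existsP[B /andP[h _]]; apply/dom_blocksP; exists B.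
Qed.

Lemma cod_blocks_pmul_sub P Q : P \in PIbar n -> Q \in PIbar n ->
  cod_blocks (pmul P Q) \subset cod_blocks Q.
Proof.
move=> hP hQ; apply/subsetP => D /cod_blocksP[A].
by rewrite has_line_pmul // => /existsP[B /andP[_ h]]; apply/cod_blocksP; exists B.
Qed.

Lemma dom_blocks_pmul P Q : P \in PIbar n -> Q \in PIbar n ->
  cod_blocks P \subset dom_blocks Q -> dom_blocks (pmul P Q) = dom_blocks P.
Proof.
move=> hP hQ sPQ; apply/eqP; rewrite eqEsubset dom_blocks_pmul_sub //=.
apply/subsetP => A /dom_blocksP[B hB].
have /dom_blocksP[D hD] : B \in dom_blocks Q.
  by apply: (subsetP sPQ); apply/cod_blocksP; exists A.
by apply/dom_blocksP; exists D; rewrite has_line_pmul //; apply/existsP; exists B; rewrite hB.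
Qed.

Lemma cod_blocks_pmul P Q : P \in PIbar n -> Q \in PIbar n ->
  dom_blocks Q \subset cod_blocks P -> cod_blocks (pmul P Q) = cod_blocks Q.
Proof.
move=> hP hQ sQP; apply/eqP; rewrite eqEsubset cod_blocks_pmul_sub //=.
apply/subsetP => D /cod_blocksP[B hB].
have /cod_blocksP[A hA] : B \in cod_blocks P.
  by apply: (subsetP sQP); apply/dom_blocksP; exists D.
by apply/cod_blocksP; exists A; rewrite has_line_pmul //; apply/existsP; exists B; rewrite hA.
Qed.

Lemma dom_blocks_ppow_sub a k : a \in PIbar n -> 0 < k ->
  dom_blocks (ppow a k) \subset dom_blocks a.
Proof.
move=> ha; elim: k => // -[_ _|k IH _]; first exact: subxx.
rewrite ppowS //; apply: subset_trans (IH isT).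
exact/dom_blocks_pmul_sub/ha/ppow_PIbar.
Qed.

Lemma cod_blocks_ppow_sub a k : a \in PIbar n -> 0 < k ->
  cod_blocks (ppow a k) \subset cod_blocks a.
Proof.
move=> ha; case: k => [//|[|k] _]; first exact: subxx.
rewrite ppowS //.
exact/cod_blocks_pmul_sub/ha/ppow_PIbar.
Qed.

End Blocks.

Section Units.
Variable n : nat.
Implicit Types (A D : {set 'I_n}) (F : {set {set 'I_n}}) (P Q a e : elt n).

Definition singletons : {set {set 'I_n}} := [set [set x] | x : 'I_n].

Lemma card_singletons : #|singletons| = n.
Proof. by rewrite card_imset ?card_ord //; apply: set1_inj. Qed.

Lemma card_block_family F : block_family F ->
  #|F| <= #|cover F| ?= iff [forall A in F, #|A| == 1].
Proof.
case/andP => h0 tF; rewrite -(eqP tF) -sum1_card; apply: leqif_sum => A hA.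
by split; [rewrite card_gt0; apply: contraNneq h0 => <- | rewrite eq_sym].
Qed.

Lemma block_family_singletons F : block_family F -> n <= #|F| -> F = singletons.
Proof.
move=> hF hn; have le_cover := card_block_family hF.
have /forall_inP F1 : [forall A in F, #|A| == 1].
  rewrite -le_cover.2 eqn_leq le_cover.1 (leq_trans _ hn) //.
  by rewrite -[X in _ <= X]card_ord max_card.
apply/eqP; rewrite eqEcard card_singletons hn andbT.
by apply/subsetP => A /F1 /cards1P[x ->]; apply: imset_f.
Qed.

Definition perm_elt (pi : {perm 'I_n}) : elt n :=
  [set [set inl x; inr (pi x)] | x : 'I_n].

Lemma mkline_set1 (x y : 'I_n) : mkline [set x] [set y] = [set inl x; inr y].
Proof. by rewrite /mkline !imset_set1. Qed.

Lemma perm_elt_PIbar pi : perm_elt pi \in PIbar n.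
Proof.
apply: PIbar_intro.
- move=> X /imsetP[x _ ->]; rewrite -mkline_set1 is_gline_mkline !set1_neq0 orbT.
  by split=> //; apply/set0Pn; exists (inl x); rewrite mkline_inl inE.
- move=> X Y /imsetP[x _ ->] /imsetP[y _ ->]; apply: contraNT; rewrite -!mkline_set1.
  by case/mkline_meet => /not_disjointP[z]; rewrite !inE => /eqP-> /eqP; [move-> | move/perm_inj->].
- case=> [x|y]; apply/bigcupP.
    by exists [set inl x; inr (pi x)]; [apply: imset_f | rewrite !inE eqxx].
  exists [set inl ((pi^-1)%g y); inr (pi ((pi^-1)%g y))]; first exact: imset_f.
  by rewrite permKV !inE eqxx orbT.
Qed.

Lemma has_line_perm_elt pi A D :
  has_line (perm_elt pi) A D = [exists x, (A == [set x]) && (D == [set pi x])].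
Proof.
apply/idP/existsP => [/and3P[/imsetP[x _] e _ _]|[x /andP[/eqP -> /eqP ->]]].
  by rewrite -mkline_set1 in e; case: (mkline_inj e) => -> ->; exists x; rewrite !eqxx.
by rewrite /has_line !set1_neq0 !andbT mkline_set1; apply/imsetP; exists x.
Qed.

Lemma dom_blocks_perm_elt pi : dom_blocks (perm_elt pi) = singletons.
Proof.
apply/setP => A; apply/dom_blocksP/imsetP => [[D]|[x _ ->]].
  by rewrite has_line_perm_elt => /existsP[x /andP[/eqP -> _]]; exists x.
by exists [set pi x]; rewrite has_line_perm_elt; apply/existsP; exists x; rewrite !eqxx.
Qed.

(* [n] disjoint nonempty blocks can only be the [n] singletons. *)
Lemma SnP P : reflect (P \in PIbar n /\ n <= #|dom_blocks P|) (P \in Sn n).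
Proof.
rewrite [P \in Sn n]inE; apply: (iffP existsP) => [[pi /eqP ->]|[hP hn]].
  by rewrite dom_blocks_perm_elt card_singletons perm_elt_PIbar.
have hdom := block_family_singletons (block_family_dom hP) hn.
have hcod : cod_blocks P = singletons.
  by apply: block_family_singletons (block_family_cod hP) _; rewrite -card_dom_cod.
pose f x := odflt x [pick y | has_line P [set x] [set y]].
have hf x : has_line P [set x] [set f x].
  have /dom_blocksP[D hD] : [set x] \in dom_blocks P by rewrite hdom imset_f.
  have /imsetP[y _ eD] : D \in singletons by rewrite -hcod; apply/cod_blocksP; exists [set x].
  rewrite /f; case: pickP => [//|/(_ y)]; by rewrite -eD hD.
have finj : injective f.
  by move=> x y e; apply/set1_inj/(has_line_injective hP (hf x)); rewrite e hf.
exists (perm finj); apply/eqP/PIbar_ext => //; first exact: perm_elt_PIbar.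
move=> A D; rewrite has_line_perm_elt; apply/idP/existsP => [h|[x /andP[/eqP -> /eqP ->]]].
  have /imsetP[x _ eA] : A \in singletons by rewrite -hdom; apply/dom_blocksP; exists D.
  subst A; exists x; rewrite permE eqxx.
  by rewrite (has_line_functional hP h (hf x)) eqxx.
by rewrite permE.
Qed.

Lemma Sn_PIbar P : P \in Sn n -> P \in PIbar n.
Proof. by case/SnP. Qed.

Lemma Sn_dom P : P \in Sn n -> dom_blocks P = singletons.
Proof. by case/SnP => hP; apply: block_family_singletons (block_family_dom hP). Qed.

Lemma Sn_cod P : P \in Sn n -> cod_blocks P = singletons.
Proof.
case/SnP => hP; rewrite card_dom_cod //.
exact: block_family_singletons (block_family_cod hP).
Qed.

Lemma Sn_mul P Q : P \in Sn n -> Q \in Sn n -> pmul P Q \in Sn n.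
Proof.
move=> hP hQ; have [hP' hQ'] := (Sn_PIbar hP, Sn_PIbar hQ).
apply/SnP; rewrite pmul_PIbar // dom_blocks_pmul ?Sn_dom ?Sn_cod //.
by rewrite card_singletons.
Qed.

Lemma Sn_mul_inv P Q : P \in PIbar n -> Q \in PIbar n ->
  pmul P Q \in Sn n -> P \in Sn n /\ Q \in Sn n.
Proof.
move=> hP hQ /SnP[hPQ hn]; split; apply/SnP; split => //.
  exact/(leq_trans hn)/subset_leq_card/dom_blocks_pmul_sub.
rewrite card_dom_cod // (leq_trans hn) // card_dom_cod //.
exact/subset_leq_card/cod_blocks_pmul_sub.
Qed.

Lemma ppow_Sn a k : a \in Sn n -> 0 < k -> ppow a k \in Sn n.
Proof. by apply: ppow_closed => P Q; apply: Sn_mul. Qed.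

Lemma ppow_Sn_inv a k : a \in PIbar n -> 0 < k -> ppow a k \in Sn n -> a \in Sn n.
Proof.
move=> ha; case: k => [//|[|k] _] //.
by rewrite ppowS // => /Sn_mul_inv[] //; apply: ppow_PIbar.
Qed.

Lemma Sn_idempotent e : e \in Sn n -> PI_idempotent e -> e = diag_elt singletons.
Proof. by move=> he hee; rewrite {1}(idempotentE (Sn_PIbar he) hee) Sn_dom. Qed.

Lemma perm_elt1_Sn : perm_elt 1 \in Sn n.
Proof. by rewrite inE; apply/existsP; exists 1%g. Qed.

Lemma block_family0 : block_family (set0 : {set {set 'I_n}}).
Proof. by apply/block_familyP; split=> ?; rewrite inE. Qed.

Lemma diag_elt0_notin_Sn : 0 < n -> diag_elt set0 \notin Sn n.
Proof.
move=> hn; apply/negP => /SnP[_].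
by rewrite dom_blocks_diag ?block_family0 // cards0 leqNgt hn.
Qed.

End Units.

Section HClasses.
Variable n : nat.
Implicit Types (C : {set 'I_n}) (F X : {set {set 'I_n}}) (a b e : elt n).

Definition block_perms F : {set elt n} :=
  [set a in PIbar n | (dom_blocks a == F) && (cod_blocks a == F)].

Lemma block_permsP F a :
  reflect [/\ a \in PIbar n, dom_blocks a = F & cod_blocks a = F] (a \in block_perms F).
Proof.
rewrite [a \in block_perms F]inE.
by apply: (iffP and3P) => -[? /eqP ? /eqP ?]; split=> //; apply/eqP.
Qed.

Lemma block_perms_PIbar F a : a \in block_perms F -> a \in PIbar n.
Proof. by case/block_permsP. Qed.

Lemma block_perms_mul F : {in block_perms F &, forall a b, pmul a b \in block_perms F}.
Proof.
move=> a b /block_permsP[ha da ca] /block_permsP[hb db cb]; apply/block_permsP.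
by rewrite pmul_PIbar // dom_blocks_pmul ?cod_blocks_pmul ?da ?ca ?db ?cb.
Qed.

Lemma idempotent_block_perms e : e \in PIbar n -> PI_idempotent e ->
  e \in block_perms (dom_blocks e).
Proof. by move=> he hee; apply/block_permsP; rewrite cod_blocks_idempotent. Qed.

Lemma block_perms_idempotent F e : e \in block_perms F -> PI_idempotent e ->
  e = diag_elt F.
Proof. by case/block_permsP => he <- _; apply: idempotentE. Qed.

Lemma pmul_diag_elt_l F a : a \in block_perms F -> pmul (diag_elt F) a = a.
Proof.
case/block_permsP => ha da _; have hF := block_family_dom ha; rewrite -da in hF *.
apply: PIbar_ext; rewrite ?pmul_PIbar ?diag_elt_PIbar // => A D.
rewrite has_line_pmul ?diag_elt_PIbar //; apply/existsP/idP => [[C]|h].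
  by rewrite has_line_diag // => /andP[/andP[/eqP <- _]].
by exists A; rewrite has_line_diag // /diag_rel eqxx h andbT; apply/dom_blocksP; exists D.
Qed.

Lemma pmul_diag_elt_r F a : a \in block_perms F -> pmul a (diag_elt F) = a.
Proof.
case/block_permsP => ha _ ca; have hF := block_family_cod ha; rewrite -ca in hF *.
apply: PIbar_ext; rewrite ?pmul_PIbar ?diag_elt_PIbar // => A D.
rewrite has_line_pmul ?diag_elt_PIbar //; apply/existsP/idP => [[C]|h].
  by rewrite has_line_diag // => /andP[h /andP[/eqP <- _]].
by exists D; rewrite has_line_diag // /diag_rel eqxx h /=; apply/cod_blocksP; exists A.
Qed.

Lemma in_right_ideal_dom a b : a \in PIbar n -> b \in PIbar n ->
  in_right_ideal a b -> dom_blocks a \subset dom_blocks b.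
Proof.
move=> ha hb /orP[/eqP -> //|/exists_inP[s hs /eqP ->]].
exact: dom_blocks_pmul_sub.
Qed.

Lemma in_left_ideal_cod a b : a \in PIbar n -> b \in PIbar n ->
  in_left_ideal a b -> cod_blocks a \subset cod_blocks b.
Proof.
move=> ha hb /orP[/eqP -> //|/exists_inP[s hs /eqP ->]].
exact: cod_blocks_pmul_sub.
Qed.

Lemma Hclass_block_perms e : e \in PIbar n -> PI_idempotent e ->
  Hclass e = block_perms (dom_blocks e).
Proof.
move=> he hee; apply/setP => a; rewrite inE.
apply/andP/idP => [[ha /and4P[r1 r2 l1 l2]]|hG]; last split.
- apply/block_permsP; split => //.
    by apply/eqP; rewrite eqEsubset !in_right_ideal_dom.
  rewrite -(cod_blocks_idempotent he hee).
  by apply/eqP; rewrite eqEsubset !in_left_ideal_cod.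
- exact: block_perms_PIbar hG.
have ha := block_perms_PIbar hG.
have [k hk hkk] := ppow_idempotent ha.
have ek : ppow a k = e.
  rewrite [RHS](idempotentE he hee); apply: block_perms_idempotent hkk.
  by apply: ppow_closed hG _; [apply: block_perms_mul | apply: ltnW].
case: k hk hkk ek => [//|k] hk _ ek.
rewrite /Hrel /in_right_ideal /in_left_ideal.
apply/and4P; split; apply/orP; right; apply/exists_inP.
- by exists a; rewrite // {1}(idempotentE he hee) pmul_diag_elt_l.
- by exists (ppow a k); rewrite ?ppow_PIbar // -ek ppowSl.
- by exists a; rewrite // {1}(idempotentE he hee) pmul_diag_elt_r.
- by exists (ppow a k); rewrite ?ppow_PIbar // -ek ppowS.
Qed.

Lemma corank_cover e : e \in PIbar n -> corank e = #|~: cover (dom_blocks e)|.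
Proof.
move=> he; apply: eq_card => x; rewrite !inE -{1}(of_rel_has_line he) /of_rel /with_points in_setU.
have -> : ([set inl x] \in rel_lines (has_line e)) = false.
  apply/negbTE/rel_linesP => -[A [D [/has_line_neq0[hA hD] e1]]].
  by move: (mkline_neq_set1 (inl x) hA hD); rewrite -e1 eqxx.
rewrite /=; apply/imsetP/negP => [[z hz /set1_inj ez] /bigcupP[A /dom_blocksP[D hD] hxA]|hx].
  move: hz; rewrite -ez inE => /negP; apply; apply/bigcupP.
  by exists (mkline A D); [apply: mkline_rel_lines | rewrite mkline_inl].
exists (inl x) => //; rewrite inE; apply/negP => /bigcupP[Y /rel_linesP[A [D [hAD ->]]]].
rewrite mkline_inl => hxA; apply: hx; apply/bigcupP.
by exists A => //; apply/dom_blocksP; exists D.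
Qed.

Lemma extend_block_family F X : block_family X -> F \subset X ->
  #|~: cover F| <= 1 -> X = F \/ (~: cover F \notin F /\ X = ~: cover F |: F).
Proof.
move=> hX sFX hU.
have new C : C \in X -> C \notin F -> C = ~: cover F.
  move=> hC hCF; apply/eqP; rewrite eqEcard (leq_trans hU) ?card_gt0; last first.
    exact: block_family_neq0 hX hC.
  rewrite andbT; apply/subsetP => x hx; rewrite inE; apply/bigcupP => -[A hA hxA].
  have eCA : C = A.
    by apply: block_family_eq hX hC (subsetP sFX _ hA) _; apply/not_disjointP; exists x.
  by move: hCF; rewrite eCA hA.
case: (boolP (X \subset F)) => [sXF|/subsetPn[C hC hCF]].
  by left; apply/eqP; rewrite eqEsubset sXF.
have eC := new C hC hCF; right; split; first by rewrite -eC.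
apply/eqP; rewrite eqEsubset; apply/andP; split; apply/subsetP => Y.
  move=> hY; apply/setU1P.
  by case: (boolP (Y \in F)) => [hYF|/(new Y hY) ->]; [right | left].
by case/setU1P => [->|/(subsetP sFX)]; rewrite -?eC.
Qed.

Lemma block_perms_isolated F a k : #|~: cover F| <= 1 ->
  a \in PIbar n -> 0 < k -> ppow a k \in block_perms F -> a \in block_perms F.
Proof.
move=> hU ha hk /block_permsP[hak dk ck].
have sd : F \subset dom_blocks a by rewrite -dk dom_blocks_ppow_sub.
have sc : F \subset cod_blocks a by rewrite -ck cod_blocks_ppow_sub.
have cda := card_dom_cod ha.
case: (extend_block_family (block_family_dom ha) sd hU) => [da|[hUF da]];
  case: (extend_block_family (block_family_cod ha) sc hU) => [ca|[hUF' ca]].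
- exact/block_permsP.
- by move: cda; rewrite da ca cardsU1 hUF' => /n_Sn.
- by move: cda; rewrite da ca cardsU1 hUF => /esym/n_Sn.
have : ppow a k \in block_perms (~: cover F |: F).
  by apply: ppow_closed hk; [apply: block_perms_mul | apply/block_permsP].
case/block_permsP => _ + _; rewrite dk => eF.
by move: hUF; rewrite {2}eF setU11.
Qed.

End HClasses.

Section BlockMoves.
Variable n : nat.
Implicit Types (A B C D U V M H : {set 'I_n}) (F G : {set {set 'I_n}}).

Definition new_block F U : bool := (U != set0) && [forall A in F, [disjoint U & A]].

Definition ext_rel U V F : rel {set 'I_n} :=
  fun A B => ((A == U) && (B == V)) || diag_rel F A B.

Definition transp_rel M H F : rel {set 'I_n} :=
  fun A B => [|| (A == M) && (B == H), (A == H) && (B == M) | diag_rel F A B].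

Lemma new_blockP F U : block_family F -> new_block F U ->
  block_family (U |: F) /\ U \notin F.
Proof. by move=> hF /andP[hU /forall_inP hdis]; apply: block_familyU1. Qed.

Lemma rel_comp_ext_rel U V F A D : U \notin F -> V \notin F -> U != V ->
  rel_comp (ext_rel U V F) (ext_rel U V F) A D = diag_rel F A D.
Proof.
move=> hU hV hUV; apply/existsP/idP => [[B]|/andP[/eqP <- hA]]; last first.
  by exists A; rewrite /ext_rel /diag_rel eqxx hA !orbT.
rewrite /ext_rel /diag_rel => /andP[/orP[/andP[/eqP eA /eqP eB]|/andP[/eqP eA hA]]
                                   /orP[/andP[/eqP eB' /eqP eD]|/andP[/eqP eB' hB]]]; subst.
- by rewrite eqxx in hUV.
- by rewrite hB in hV.
- by rewrite hA in hU.
- by rewrite eqxx hB.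
Qed.

Lemma rel_comp_ext_rel_inv U V F A D : U \notin F -> V \notin F ->
  rel_comp (ext_rel U V F) (ext_rel V U F) A D = diag_rel (U |: F) A D.
Proof.
move=> hU hV; apply/existsP/idP => [[B]|/andP[/eqP <-]]; last first.
  case/setU1P => [->|hA]; first by exists V; rewrite /ext_rel !eqxx.
  by exists A; rewrite /ext_rel /diag_rel eqxx hA !orbT.
rewrite /ext_rel /diag_rel => /andP[/orP[/andP[/eqP eA /eqP eB]|/andP[/eqP eA hA]]
                                   /orP[/andP[/eqP eB' /eqP eD]|/andP[/eqP eB' hB]]]; subst.
- by rewrite eqxx setU11.
- by rewrite hB in hV.
- by rewrite hA in hV.
- by rewrite eqxx setU1r.
Qed.

Lemma rel_comp_transp_rel M H F A D : M \notin F -> H \notin F -> M != H ->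
  rel_comp (transp_rel M H F) (transp_rel M H F) A D = diag_rel (M |: (H |: F)) A D.
Proof.
move=> hM hH hMH; apply/existsP/idP => [[B]|/andP[/eqP <-]]; last first.
  case/setU1P => [->|/setU1P[->|hA]].
  - by exists H; rewrite /transp_rel !eqxx /= orbT.
  - by exists M; rewrite /transp_rel !eqxx /= orbT.
  - by exists A; rewrite /transp_rel /diag_rel eqxx hA !orbT.
rewrite /transp_rel /diag_rel => /andP[
    /or3P[/andP[/eqP eA /eqP eB]|/andP[/eqP eA /eqP eB]|/andP[/eqP eA hA]]
    /or3P[/andP[/eqP eB' /eqP eD]|/andP[/eqP eB' /eqP eD]|/andP[/eqP eB' hB]]]; subst;
  rewrite ?eqxx ?inE ?eqxx ?orbT //;
  by [rewrite eqxx in hMH | rewrite hB in hH | rewrite hB in hM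
     | rewrite hA in hM | rewrite hA in hH | rewrite hA !orbT].
Qed.

Lemma rel_comp_transp_diag M H F G A D : M \in G -> H \notin G -> M != H ->
  G \subset F -> rel_comp (transp_rel M H ((F :\ M) :\ H)) (diag_rel G) A D =
  ext_rel H M (G :\ M) A D.
Proof.
move=> hM hH hMH sGF; apply/existsP/idP => [[B]|]; last first.
  case/orP => [/andP[/eqP -> /eqP ->]|/andP[/eqP <- /setD1P[hAM hA]]].
    by exists M; rewrite /transp_rel /diag_rel !eqxx hM orbT.
  have hAH : A != H by apply: contraNneq hH => <-.
  by exists A; rewrite /transp_rel /diag_rel eqxx !in_setD1 hAM hAH (subsetP sGF) ?orbT.
rewrite /transp_rel /ext_rel /diag_rel => /andP[
    /or3P[/andP[/eqP eA /eqP eB]|/andP[/eqP eA /eqP eB]|/andP[/eqP eA hA]]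
    /andP[/eqP eD hD]]; subst.
- by rewrite hD in hH.
- by rewrite !eqxx.
- by move: hA; rewrite !in_setD1 => /and3P[_ hAM _]; rewrite eqxx hAM hD orbT.
Qed.

Lemma block_bij_ext_rel U V F : block_family F -> new_block F U -> new_block F V ->
  block_bij (ext_rel U V F).
Proof.
move=> hF hU hV; have [[hUF nUF] [hVF nVF]] := (new_blockP hF hU, new_blockP hF hV).
apply: (block_bij_of_families hUF hVF).
- by move=> A B /orP[/andP[/eqP -> /eqP ->]|/andP[/eqP <- hA]]; rewrite !inE ?eqxx ?hA ?orbT.
- move=> A B B' /orP[/andP[/eqP eA /eqP eB]|/andP[/eqP eA hA]]
                 /orP[/andP[/eqP eA' /eqP eB']|/andP[/eqP eA' hA']]; subst => //.
  + by rewrite hA' in nUF.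
  + by rewrite hA in nUF.
- move=> A A' B /orP[/andP[/eqP eA /eqP eB]|/andP[/eqP eA hA]]
                 /orP[/andP[/eqP eA' /eqP eB']|/andP[/eqP eA' hA']]; subst => //.
  + by rewrite hA' in nVF.
  + by rewrite hA in nVF.
Qed.

Lemma block_bij_transp_rel M H F : block_family (M |: (H |: F)) ->
  M \notin F -> H \notin F -> M != H -> block_bij (transp_rel M H F).
Proof.
move=> hF hM hH hMH; apply: (block_bij_of_families hF hF).
- by move=> A B /or3P[/andP[/eqP -> /eqP ->]|/andP[/eqP -> /eqP ->]|/andP[/eqP <- hA]];
    rewrite !inE ?eqxx ?hA ?orbT.
- move=> A B B' /or3P[/andP[/eqP eA /eqP eB]|/andP[/eqP eA /eqP eB]|/andP[/eqP eA hA]]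
                 /or3P[/andP[/eqP eA' /eqP eB']|/andP[/eqP eA' /eqP eB']|/andP[/eqP eA' hA']];
    subst => //; by [rewrite eqxx in hMH | rewrite hA in hM | rewrite hA in hH
                    | rewrite hA' in hM | rewrite hA' in hH].
- move=> A A' B /or3P[/andP[/eqP eA /eqP eB]|/andP[/eqP eA /eqP eB]|/andP[/eqP eA hA]]
                 /or3P[/andP[/eqP eA' /eqP eB']|/andP[/eqP eA' /eqP eB']|/andP[/eqP eA' hA']];
    subst => //; by [rewrite eqxx in hMH | rewrite hA in hM | rewrite hA in hH
                    | rewrite hA' in hM | rewrite hA' in hH].
Qed.

Lemma ext_rel_sq U V F : block_family F -> new_block F U -> new_block F V -> U != V ->
  pmul (of_rel (ext_rel U V F)) (of_rel (ext_rel U V F)) = diag_elt F.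
Proof.
move=> hF hU hV hUV; rewrite pmul_of_rel; try exact: block_bij_ext_rel.
have [[_ nUF] [_ nVF]] := (new_blockP hF hU, new_blockP hF hV).
by apply: eq_of_rel => A D; rewrite rel_comp_ext_rel.
Qed.

Lemma ext_rel_mul_inv U V F : block_family F -> new_block F U -> new_block F V ->
  pmul (of_rel (ext_rel U V F)) (of_rel (ext_rel V U F)) = diag_elt (U |: F).
Proof.
move=> hF hU hV; rewrite pmul_of_rel; try exact: block_bij_ext_rel.
have [[_ nUF] [_ nVF]] := (new_blockP hF hU, new_blockP hF hV).
by apply: eq_of_rel => A D; rewrite rel_comp_ext_rel_inv.
Qed.

Lemma transp_rel_sq M H F : block_family (M |: (H |: F)) ->
  M \notin F -> H \notin F -> M != H ->
  pmul (of_rel (transp_rel M H F)) (of_rel (transp_rel M H F)) = diag_elt (M |: (H |: F)).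
Proof.
move=> hF hM hH hMH; rewrite pmul_of_rel; try exact: block_bij_transp_rel.
by apply: eq_of_rel => A D; rewrite rel_comp_transp_rel.
Qed.

Lemma transp_rel_mul_diag M H F G : block_family F -> G \subset F ->
  M \in G -> H \in F -> H \notin G ->
  pmul (of_rel (transp_rel M H ((F :\ M) :\ H))) (diag_elt G) =
  of_rel (ext_rel H M (G :\ M)).
Proof.
move=> hF sGF hMG hHF hHG; have hMH : M != H by apply: contraNneq hHG => <-.
have eF : M |: (H |: ((F :\ M) :\ H)) = F.
  rewrite setD1K; last by rewrite in_setD1 eq_sym hMH hHF.
  by rewrite setD1K // (subsetP sGF).
rewrite pmul_of_rel; last 2 first.
- by apply: block_bij_transp_rel; rewrite ?eF ?in_setD1 ?eqxx ?andbF.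
- exact/block_bij_diag/(block_familyS sGF).
by apply: eq_of_rel => A D; rewrite rel_comp_transp_diag.
Qed.

Lemma block_family_new_block F G U : block_family F -> G \subset F ->
  U \in F -> U \notin G -> new_block G U.
Proof.
move=> hF sGF hU hUG; rewrite /new_block (block_family_neq0 hF hU).
apply/forall_inP => A hA; apply: contraNT hUG => /(block_family_eq hF hU (subsetP sGF _ hA)).
by move=> ->.
Qed.

(* Either a point is uncovered, or some block [C] has two points, one of
   which is split off as [U]. *)
Lemma exists_new_block F : block_family F -> 0 < #|F| < n ->
  exists C U, [/\ C \in F, U != C & new_block (F :\ C) U].
Proof.
move=> hF /andP[/card_gt0P[G0 hG0] ltFn].
case: (boolP ([set: 'I_n] \subset cover F)) => [|/subsetPn[z _ hz]]; last first.
  exists G0, [set z]; split => //.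
    by apply: contraNneq hz => e; apply/bigcupP; exists G0; rewrite // -e inE.
  rewrite /new_block set1_neq0; apply/forall_inP => A /setD1P[_ hA].
  by rewrite disjoints1; apply: contraNN hz => hzA; apply/bigcupP; exists A.
move=> /subset_leq_card; rewrite cardsT card_ord => hn.
have : ~~ [forall A in F, #|A| == 1].
  by rewrite -(card_block_family hF).2 neq_ltn (leq_trans ltFn hn).
case/forall_inPn => G hG hG1.
have : 1 < #|G|.
  by rewrite ltn_neqAle eq_sym hG1 card_gt0 (block_family_neq0 hF hG).
case/card_gt1P => x [y [hx hy hxy]]; exists G, [set x]; split => //.
  by apply: contraNneq hxy => eG; move: hy; rewrite -eG inE eq_sym.
rewrite /new_block set1_neq0; apply/forall_inP => A /setD1P[hAG hA].
rewrite disjoints1; apply: contra hAG => hxA.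
by rewrite (block_family_eq hF hA hG) //; apply/not_disjointP; exists x.
Qed.

End BlockMoves.

Section Isolated.
Variables (n : nat) (T : {set elt n}).
Hypothesis isoT : isolated_subsemigroup T.
Implicit Types (M U V : {set 'I_n}) (F G : {set {set 'I_n}}) (a b e f : elt n).

Lemma isolated_PIbar a : a \in T -> a \in PIbar n.
Proof. by case: isoT => /subsetP sT _ _ _ /sT. Qed.

Lemma isolated_mul : {in T &, forall a b, pmul a b \in T}.
Proof. by case: isoT. Qed.

Lemma isolated_ppow a k : a \in T -> 0 < k -> ppow a k \in T.
Proof. exact/ppow_closed/isolated_mul. Qed.

Lemma isolated_root a k : a \in PIbar n -> 0 < k -> ppow a k \in T -> a \in T.
Proof. by case: isoT => _ _ _; apply. Qed.

Lemma isolated_sqrt a : a \in PIbar n -> pmul a a \in T -> a \in T.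
Proof. by move=> ha; apply: (@isolated_root a 2). Qed.

Lemma isolated_diag_setU1 F U V : block_family F -> new_block F U -> new_block F V ->
  U != V -> diag_elt F \in T -> diag_elt (U |: F) \in T.
Proof.
move=> hF hU hV hUV hFT; rewrite -(ext_rel_mul_inv hF hU hV); apply: isolated_mul.
  apply: isolated_sqrt; first exact/of_rel_PIbar/block_bij_ext_rel.
  by rewrite ext_rel_sq.
apply: isolated_sqrt; first exact/of_rel_PIbar/block_bij_ext_rel.
by rewrite ext_rel_sq // eq_sym.
Qed.

(* The square root [t] of [diag_elt F] transposing [M] with a block [H] of [F]
   outside [G] gives [t * diag_elt G], whose square is [diag_elt (G :\ M)]. *)
Lemma isolated_diag_setD1 F G M : block_family F -> G \proper F -> M \in G ->
  diag_elt F \in T -> diag_elt G \in T -> diag_elt (G :\ M) \in T.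
Proof.
move=> hF /properP[sGF [H hHF hHG]] hMG hFT hGT.
have hMH : M != H by apply: contraNneq hHG => <-.
have hG := block_familyS sGF hF; have hGM := block_familyS (subD1set G M) hG.
have sGMF : G :\ M \subset F := subset_trans (subD1set G M) sGF.
have hMF : M \in F := subsetP sGF M hMG.
set Fm := (F :\ M) :\ H.
have eF : M |: (H |: Fm) = F.
  rewrite setD1K; last by rewrite in_setD1 eq_sym hMH hHF.
  by rewrite setD1K.
have [nMFm nHFm] : M \notin Fm /\ H \notin Fm by rewrite !in_setD1 !eqxx !andbF.
have htT : of_rel (transp_rel M H Fm) \in T.
  apply: isolated_sqrt; first by apply/of_rel_PIbar/block_bij_transp_rel; rewrite ?eF.
  by rewrite transp_rel_sq ?eF.
have := isolated_mul htT hGT; rewrite transp_rel_mul_diag // => hxT.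
rewrite -(@ext_rel_sq _ H M) 1?eq_sym //; first exact: isolated_mul.
- by apply: (block_family_new_block hF sGMF hHF); rewrite in_setD1 negb_and hHG orbT.
- by apply: (block_family_new_block hF sGMF hMF); rewrite in_setD1 eqxx.
Qed.

Lemma isolated_diag0 F G : block_family F -> G \proper F ->
  diag_elt F \in T -> diag_elt G \in T -> diag_elt set0 \in T.
Proof.
move=> hF; have [m] := ubnP #|G|; elim: m G => // m IH G hm hGF hFT hGT.
case: (set_0Vmem G) => [<- //|[M hM]].
apply: (IH (G :\ M)) => //.
- by move: hm; rewrite (cardsD1 M G) hM.
- exact: sub_proper_trans (subD1set G M) hGF.
- exact: isolated_diag_setD1 hF hGF hM hFT hGT.
Qed.

Lemma isolated_two_idempotents_diag0 e f : e \in T -> f \in T ->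
  PI_idempotent e -> PI_idempotent f -> e != f -> diag_elt set0 \in T.
Proof.
move=> heT hfT hee hff hef.
have [he hf] := (isolated_PIbar heT, isolated_PIbar hfT).
have [hFe hFf] := (block_family_dom he, block_family_dom hf).
rewrite (idempotentE he hee) in heT hef; rewrite (idempotentE hf hff) in hfT hef.
have hIT := isolated_mul heT hfT; rewrite diag_elt_mul // in hIT.
have [eI|nI] := eqVneq (dom_blocks e :&: dom_blocks f) (dom_blocks e).
  apply: isolated_diag0 hFf _ hfT heT.
  by rewrite properEneq -eI subsetIr andbT; apply: contraNneq hef => <-; rewrite eI.
by apply: isolated_diag0 hFe _ heT hIT; rewrite properEneq nI subsetIl.
Qed.

Lemma isolated_diag_nonunit F : diag_elt set0 \in T -> block_family F -> #|F| < n ->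
  diag_elt F \in T.
Proof.
move=> h0T; have [m] := ubnP #|F|; elim: m F => // m IH F hm hF hFn.
case: (posnP #|F|) => [/eqP|hF0]; first by rewrite cards_eq0 => /eqP ->.
have [C [U [hC hUC hU]]] := exists_new_block hF (introT andP (conj hF0 hFn)).
have hFC := block_familyS (subD1set F C) hF.
have ltFC : #|F :\ C| < #|F| by rewrite (cardsD1 C F) hC.
rewrite -(setD1K hC); apply: (isolated_diag_setU1 hFC _ hU); rewrite 1?eq_sym //.
- by apply: (block_family_new_block hF (subD1set F C) hC); rewrite setD11.
- by apply: IH => //; [apply: leq_trans ltFC _; rewrite -ltnS | apply: ltn_trans ltFC hFn].
Qed.

Lemma isolated_nonunit a : diag_elt set0 \in T -> a \in PIbar n -> a \notin Sn n ->
  a \in T.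
Proof.
move=> h0T ha haS; have [k /ltnW hk hkk] := ppow_idempotent ha.
have hak := ppow_PIbar ha hk.
apply: (isolated_root ha hk); rewrite (idempotentE hak hkk).
apply: isolated_diag_nonunit h0T (block_family_dom hak) _.
by rewrite ltnNge; apply: contra haS => hn; apply: (ppow_Sn_inv ha hk); apply/SnP.
Qed.

Lemma isolated_corank e : e \in T -> PI_idempotent e ->
  {in T, forall f, PI_idempotent f -> f = e} -> corank e <= 1.
Proof.
move=> heT hee huniq; have he := isolated_PIbar heT.
set F := dom_blocks e; have hF : block_family F := block_family_dom he.
rewrite corank_cover // leqNgt; apply/negP => /card_gt1P[x1 [x2 [h1 h2 h12]]].
have new x : x \in ~: cover F -> new_block F [set x].
  rewrite inE => hx; rewrite /new_block set1_neq0; apply/forall_inP => A hA.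
  by rewrite disjoints1; apply: contraNN hx => hxA; apply/bigcupP; exists A.
have hx1T : diag_elt ([set x1] |: F) \in T.
  apply: isolated_diag_setU1 (new x1 h1) (new x2 h2) _ _ => //.
    by apply: contra h12 => /eqP/set1_inj ->.
  by rewrite -idempotentE.
have [hF1 nx1] := new_blockP hF (new x1 h1).
have := dom_blocks_diag hF1; rewrite (huniq _ hx1T (diag_elt_idempotent hF1)) -/F.
by move=> eF; move: nx1; rewrite eF setU11.
Qed.

End Isolated.

Section Classification.
Variable n : nat.
Implicit Types (T : {set elt n}) (a e f u : elt n).

Lemma isolated_subsemigroup_PIbar : isolated_subsemigroup (PIbar n).
Proof.
split=> //; last exact: pmul_PIbar.
by apply/set0Pn; exists (diag_elt set0); apply/diag_elt_PIbar/block_family0.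
Qed.

Lemma isolated_subsemigroup_Sn : isolated_subsemigroup (Sn n).
Proof.
split; last exact: ppow_Sn_inv.
- by apply/subsetP => a; apply: Sn_PIbar.
- by apply/set0Pn; exists (perm_elt 1); apply: perm_elt1_Sn.
- exact: Sn_mul.
Qed.

Lemma isolated_subsemigroup_nonunits : 0 < n -> isolated_subsemigroup (PIbar n :\: Sn n).
Proof.
move=> hn; split.
- exact: subsetDl.
- apply/set0Pn; exists (diag_elt set0).
  by rewrite in_setD diag_elt0_notin_Sn ?diag_elt_PIbar ?block_family0.
- move=> a b /setDP[ha haS] /setDP[hb hbS]; rewrite in_setD pmul_PIbar // andbT.
  by apply: contra haS => /(Sn_mul_inv ha hb)[].
- move=> a k ha hk /setDP[_ hS]; rewrite in_setD ha andbT.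
  by apply: contra hS => haS; apply: ppow_Sn.
Qed.

Lemma isolated_subsemigroup_Hclass e : e \in PIbar n -> PI_idempotent e ->
  corank e <= 1 -> isolated_subsemigroup (Hclass e).
Proof.
move=> he hee hc; rewrite Hclass_block_perms //; split.
- by apply/subsetP => a; apply: block_perms_PIbar.
- by apply/set0Pn; exists e; apply: idempotent_block_perms.
- exact: block_perms_mul.
- by move=> a k; apply: block_perms_isolated; rewrite -corank_cover.
Qed.

Lemma isolated_idempotent T : isolated_subsemigroup T ->
  exists2 e, e \in T & PI_idempotent e.
Proof.
move=> isoT; have [_ /set0Pn[a haT] _ _] := isoT.
have [k /ltnW hk hkk] := ppow_idempotent (isolated_PIbar isoT haT).
by exists (ppow a k) => //; apply: isolated_ppow.
Qed.

Lemma ppow_Sn_idempotent a : a \in Sn n ->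
  exists2 k, 0 < k & ppow a k = diag_elt (singletons n).
Proof.
move=> haS; have [k /ltnW hk hkk] := ppow_idempotent (Sn_PIbar haS).
by exists k => //; apply: Sn_idempotent => //; apply: ppow_Sn.
Qed.

(* Two idempotents force the zero, hence every non-unit, into [T]; a unit in
   [T] brings in the identity, a power of every unit. *)
Lemma isolated_two_idempotents T e f : isolated_subsemigroup T ->
  e \in T -> f \in T -> PI_idempotent e -> PI_idempotent f -> e != f ->
  T = PIbar n \/ T = PIbar n :\: Sn n.
Proof.
move=> isoT heT hfT hee hff hef.
have hnon a : a \in PIbar n -> a \notin Sn n -> a \in T.
  exact/isolated_nonunit/(isolated_two_idempotents_diag0 isoT heT hfT hee hff hef).
have sTP : T \subset PIbar n by case: isoT.
case: (boolP [exists u in T, u \in Sn n]) => [/exists_inP[u huT huS]|hno].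
  left; apply/eqP; rewrite eqEsubset sTP; apply/subsetP => a ha.
  case: (boolP (a \in Sn n)) => [haS|]; last exact: hnon.
  have [k hk eak] := ppow_Sn_idempotent haS; have [j hj euj] := ppow_Sn_idempotent huS.
  by apply: (isolated_root isoT ha hk); rewrite eak -euj isolated_ppow.
right; apply/eqP; rewrite eqEsubset; apply/andP; split; apply/subsetP => a.
  move=> haT; rewrite in_setD (subsetP sTP _ haT) andbT.
  by apply: contra hno => haS; apply/exists_inP; exists a.
by case/setDP; apply: hnon.
Qed.

(* With a single idempotent [e], every element of [T] has [e] as a power. *)
Lemma isolated_unique_idempotent T e : isolated_subsemigroup T ->
  e \in T -> PI_idempotent e -> {in T, forall f, PI_idempotent f -> f = e} ->
  T = Hclass e.
Proof.
move=> isoT heT hee huniq; have he := isolated_PIbar isoT heT.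
have hc := isolated_corank isoT heT hee huniq; rewrite corank_cover // in hc.
rewrite Hclass_block_perms //; apply/setP => b; apply/idP/idP => hb.
  have hbP := isolated_PIbar isoT hb.
  have [k /ltnW hk hkk] := ppow_idempotent hbP.
  apply: (block_perms_isolated hc hbP hk).
  by rewrite (huniq _ (isolated_ppow isoT hb hk) hkk) idempotent_block_perms.
have hbP := block_perms_PIbar hb.
have [k /ltnW hk hkk] := ppow_idempotent hbP.
apply: (isolated_root isoT hbP hk).
have hbk := ppow_closed (@block_perms_mul _ _) hb hk.
by rewrite (block_perms_idempotent hbk hkk) -idempotentE.
Qed.

End Classification.

Theorem mainTheorem13 (n : nat) (hn : 2 <= n) (T : {set elt n}) :
  isolated_subsemigroup T <->
  [\/ T = PIbar n, T = Sn n, T = PIbar n :\: Sn n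
    | exists e, [/\ e \in PIbar n, PI_idempotent e, corank e <= 1 & T = Hclass e]].
Proof.
split=> [isoT|]; last first.
  case=> [->|->|->|[e [he hee hc ->]]].
  - exact: isolated_subsemigroup_PIbar.
  - exact: isolated_subsemigroup_Sn.
  - exact/isolated_subsemigroup_nonunits/ltnW.
  - exact: isolated_subsemigroup_Hclass.
have [e heT hee] := isolated_idempotent isoT.
case: (boolP [exists f in T, PI_idempotent f && (f != e)]).
  case/exists_inP => f hfT /andP[hff hfe].
  by case: (isolated_two_idempotents isoT hfT heT hff hee hfe) => ->; [apply: Or41 | apply: Or43].
move=> hno; have huniq : {in T, forall f, PI_idempotent f -> f = e}.
  by move=> f hfT hff; apply/eqP; apply: contraNT hno => hfe; apply/exists_inP; exists f; rewrite ?hff.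
apply: Or44; exists e; split=> //.
- exact (isolated_PIbar isoT heT).
- exact (isolated_corank isoT heT hee huniq).
- exact (isolated_unique_idempotent isoT heT hee huniq).
Qed.
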